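(* Let $f:\mathbb{R}^d\to\mathbb{R}$ be differentiable, bounded from below with infimum $f^{\mathrm{inf}}=\inf_x f(x)\in\mathbb{R}$, and with $L$-Lipschitz gradient. For each $x\in\mathbb{R}^d$ let $g(x)$ be a random vector in $\mathbb{R}^d$ with $\mathbb{E}[g(x)]=\nabla f(x)$. Then: (1) If (M-SG) holds for some $\alpha\ge 0$, then (E-SG) holds for some $\alpha\ge 0$. (2) If (E-SG) holds for some $\alpha$, then (RG) holds for some $\alpha,\beta\ge 0$. (3) If (BV) holds for some $\sigma\ge 0$, then (RG) holds for some $\alpha,\beta\ge 0$. (4) If $f=\frac1n\sum_{i=1}^n f_i$ with each $f_i$ differentiable, $g(x)=\nabla f_i(x)$ with $i$ drawn uniformly from $\{1,\dots,n\}$, and (GC) holds for some $\eta>0$, then (RG) holds for some $\alpha,\beta\ge0$. (5) If (RG) holds for some $\alpha,\beta\ge 0$, then (ES) holds for some $A,B,C\ge 0$. (6) If $f(x)=\mathbb{E}_{\xi\sim\mathcal{D}}[f_\xi(x)]$ for a family of differentiable functions $f_\xi$, $g(x)=\nabla f_\xi(x)$ with $\xi\sim\mathcal{D}$, and (SS) holds, then (ES) holds for some $A,B,C\ge 0$.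
   Context: Conditions on the stochastic gradient (each required for all $x,y\in\mathbb{R}^d$): (M-SG): $\|g(x)\|^2\le \alpha\|\nabla f(x)\|^2$ almost surely. (E-SG): $\mathbb{E}\|g(x)\|^2\le \alpha\|\nabla f(x)\|^2$. (RG): $\mathbb{E}\|g(x)\|^2\le \alpha\|\nabla f(x)\|^2+\beta$. (BV): $\mathbb{E}\|g(x)-\nabla f(x)\|^2\le\sigma^2$. (GC): $\langle\nabla f_i(x),\nabla f_j(x)\rangle\ge -\eta$ for all $i\neq j$. (SS): almost surely in $\xi$, $\|\nabla f_\xi(x)-\nabla f_\xi(y)\|\le L\|x-y\|$ and $f_\xi(x)\ge 0$. (ES): $\mathbb{E}\|g(x)\|^2\le 2A\,(f(x)-f^{\mathrm{inf}})+B\|\nabla f(x)\|^2+C$. Norms are Euclidean. *)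

From HB Require Import structures.
From mathcomp Require Import all_boot all_order all_algebra.
From mathcomp Require Import all_classical all_reals all_analysis.
Set Implicit Arguments.
Unset Strict Implicit.
Unset Printing Implicit Defensive.
Import Order.TTheory GRing.Theory Num.Theory.
Import numFieldNormedType.Exports.
Local Open Scope classical_set_scope.
Local Open Scope ring_scope.

Section Defs.
Variables (R : realType) (d : nat).
Local Notation V := 'rV[R]_d.

Definition dot (u v : V) : R := \sum_(i < d) u 0 i * v 0 i.
Definition sqn (u : V) : R := dot u u.
Definition enorm (u : V) : R := Num.sqrt (sqn u).

Definition has_gradient (f : V -> R) (G : V -> V) : Prop :=
  forall x, differentiable f x /\ ('d f x : V -> R) = (fun h => dot (G x) h).

Definition lipschitz_grad (G : V -> V) (L : R) : Prop :=
  forall x y, enorm (G x - G y) <= L * enorm (x - y).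

Definition is_inf_of (f : V -> R) (finf : R) : Prop :=
  (forall x, finf <= f x) /\ (forall e, 0 < e -> exists x, f x < finf + e).

Variables (dT : measure_display) (T : measurableType dT) (P : probability T R).

Definition unbiased (g : V -> T -> V) (gradf : V -> V) : Prop :=
  forall x (i : 'I_d),
    P.-integrable setT (fun w => (g x w 0 i)%:E) /\
    (\int[P]_w (g x w 0 i)%:E = (gradf x 0 i)%:E)%E.

Definition MSG (g : V -> T -> V) (gradf : V -> V) (alpha : R) : Prop :=
  forall x, {ae P, forall w, sqn (g x w) <= alpha * sqn (gradf x)}.

Definition ESG (g : V -> T -> V) (gradf : V -> V) (alpha : R) : Prop :=
  forall x, (\int[P]_w (sqn (g x w))%:E <= (alpha * sqn (gradf x))%:E)%E.

Definition RG (g : V -> T -> V) (gradf : V -> V) (alpha beta : R) : Prop :=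
  forall x, (\int[P]_w (sqn (g x w))%:E <= (alpha * sqn (gradf x) + beta)%:E)%E.

Definition BV (g : V -> T -> V) (gradf : V -> V) (sigma : R) : Prop :=
  forall x, (\int[P]_w (sqn (g x w - gradf x))%:E <= (sigma ^+ 2)%:E)%E.

Definition ES (g : V -> T -> V) (f : V -> R) (finf : R) (gradf : V -> V)
    (A B C : R) : Prop :=
  forall x, (\int[P]_w (sqn (g x w))%:E <=
             (2 * A * (f x - finf) + B * sqn (gradf x) + C)%:E)%E.

End Defs.

(* Items (1), (2) and (5) only use monotonicity of the integral and weakening of
   the constants, and (3) integrates |g|^2 <= 2 |g - grad f|^2 + 2 |grad f|^2.
   For (4), E |g(x)|^2 = (1/n) sum_i |grad f_i(x)|^2, whereas by gradient
   confusion n^2 |grad f(x)|^2 = |sum_i grad f_i(x)|^2 >= sum_i |grad f_i(x)|^2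
   - n (n - 1) eta; so (RG) holds with alpha = n and beta = (n - 1) eta.
   For (6), a nonnegative function h with M-Lipschitz gradient satisfies
   |grad h(x)|^2 <= 4 M h(x), by one gradient step from x; applied to
   each f_xi and integrated, E |g(x)|^2 <= 4 M f(x), which is (ES) with A = 2 M,
   B = 0 and C = 4 M max(f^inf, 0). *)

From HB Require Import structures.
From mathcomp Require Import all_boot all_order all_algebra.
From mathcomp Require Import all_classical all_reals all_analysis.
From mathcomp Require Import ring lra measurable_realfun.
Import Order.TTheory GRing.Theory Num.Theory.
Import numFieldNormedType.Exports.
Local Open Scope classical_set_scope.
Local Open Scope ring_scope.

Section InnerProduct.
Context {R : realType} {d : nat}.
Local Notation V := 'rV[R]_d.
Implicit Types u v w : V.

Lemma dotC u v : dot u v = dot v u.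
Proof. by apply: eq_bigr => i _; rewrite mulrC. Qed.

Lemma dotDl u v w : dot (u + v) w = dot u w + dot v w.
Proof. by rewrite /dot -big_split; apply: eq_bigr => i _; rewrite !mxE mulrDl. Qed.

Lemma dotZl (a : R) u v : dot (a *: u) v = a * dot u v.
Proof. by rewrite /dot mulr_sumr; apply: eq_bigr => i _; rewrite !mxE mulrA. Qed.

Lemma dotBl u v w : dot (u - v) w = dot u w - dot v w.
Proof. by rewrite -scaleN1r dotDl dotZl mulN1r. Qed.

Lemma dotZr (a : R) u v : dot u (a *: v) = a * dot u v.
Proof. by rewrite dotC dotZl dotC. Qed.

Lemma dot_suml (I : Type) (r : seq I) (F : I -> V) v :
  dot (\sum_(i <- r) F i) v = \sum_(i <- r) dot (F i) v.
Proof.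
elim: r => [|a r IH]; last by rewrite !big_cons dotDl IH.
by rewrite !big_nil /dot big1 // => i _; rewrite mxE mul0r.
Qed.

Lemma dot_sumr (I : Type) (r : seq I) (F : I -> V) v :
  dot v (\sum_(i <- r) F i) = \sum_(i <- r) dot v (F i).
Proof. by rewrite dotC dot_suml; apply: eq_bigr => i _; rewrite dotC. Qed.

Lemma sqn_ge0 u : 0 <= sqn u.
Proof. by apply: sumr_ge0 => i _; rewrite -expr2 sqr_ge0. Qed.

Lemma sqnD u v : sqn (u + v) = sqn u + 2 * dot u v + sqn v.
Proof. rewrite /sqn dotDl ![dot _ (_ + _)]dotC !dotDl (dotC v u); ring. Qed.

Lemma sqnZ (a : R) u : sqn (a *: u) = a ^+ 2 * sqn u.
Proof. by rewrite /sqn dotZl dotZr mulrA expr2. Qed.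

Lemma sqn_le_split u v : sqn u <= 2 * sqn (u - v) + 2 * sqn v.
Proof.
rewrite -{1}(subrK v u); move: (u - v) => c.
by have := sqn_ge0 (c - v); rewrite -scaleN1r !sqnD sqnZ dotZr; lra.
Qed.

Lemma sqr_enorm u : enorm u ^+ 2 = sqn u.
Proof. by rewrite sqr_sqrtr // sqn_ge0. Qed.

Lemma enormZ (a : R) u : 0 <= a -> enorm (a *: u) = a * enorm u.
Proof. by move=> a0; rewrite /enorm sqnZ sqrtrM ?sqr_ge0 // sqrtr_sqr ger0_norm. Qed.

(* Cauchy-Schwarz, from the discriminant of t |-> sqn (u - t v) >= 0. *)
Lemma sqr_dot_le u v : dot u v ^+ 2 <= sqn u * sqn v.
Proof.
have quad t : 0 <= sqn u - 2 * t * dot u v + t ^+ 2 * sqn v.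
  by have := sqn_ge0 (u - t *: v); rewrite -scaleNr sqnD sqnZ dotZr sqrrN; lra.
have [v0|v0] := eqVneq (sqn v) 0.
  have [->|uv0] := eqVneq (dot u v) 0; first by rewrite expr0n mulr_ge0 ?sqn_ge0.
  have := quad ((sqn u + 1) / (2 * dot u v)); rewrite v0.
  by rewrite [_ * dot u v](_ : _ = sqn u + 1); [lra | field; rewrite uv0].
have v_gt0 : 0 < sqn v by rewrite lt_neqAle eq_sym v0 sqn_ge0.
have := quad (dot u v / sqn v).
rewrite [X in 0 <= X](_ : _ = (sqn u * sqn v - dot u v ^+ 2) / sqn v); last first.
  by field; rewrite v0.
by rewrite pmulr_lge0 ?invr_gt0 // subr_ge0.
Qed.

Lemma dot_le_enormM u v : dot u v <= enorm u * enorm v.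
Proof.
rewrite /enorm -sqrtrM ?sqn_ge0 // (le_trans (ler_norm _)) //.
by rewrite -sqrtr_sqr ler_sqrt ?mulr_ge0 ?sqn_ge0 // sqr_dot_le.
Qed.

Lemma sum_sqn_le_sqn_sum {n : nat} {v : 'I_n -> V} {eta : R} :
  (forall i j, i != j -> - eta <= dot (v i) (v j)) ->
  \sum_i sqn (v i) <= sqn (\sum_i v i) + n%:R * (n%:R - 1) * eta.
Proof.
move=> confusion.
have row i : sqn (v i) - (n%:R - 1) * eta <= dot (v i) (\sum_j v j).
  rewrite dot_sumr (bigD1 i) //= lerD2l.
  have Ecst : \sum_(j < n) - eta = - eta + \sum_(j < n | j != i) - eta by rewrite (bigD1 i).
  have : \sum_(j | j != i) - eta <= \sum_(j | j != i) dot (v i) (v j).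
    by apply: ler_sum => j ji; apply: confusion; rewrite eq_sym.
  by move: Ecst; rewrite sumr_const card_ord -mulr_natl; lra.
have : \sum_i (sqn (v i) - (n%:R - 1) * eta) <= \sum_i dot (v i) (\sum_j v j).
  by apply: ler_sum => i _; apply: row.
rewrite sumrB sumr_const card_ord -mulr_natl -dot_suml -/(sqn _); lra.
Qed.

End InnerProduct.

Section Smoothness.
Context {R : realType} {d : nat}.
Local Notation V := 'rV[R]_d.
Context {h : V -> R} {G : V -> V}.
Hypothesis hG : has_gradient h G.

Lemma differentiable_line (x v : V) (t : R) :
  differentiable (fun s : R => x + s *: v) t /\
  ('d (fun s : R => x + s *: v) t : R -> V) = (fun s => s *: v).
Proof.
have line_is_diff := @is_diffD R R^o V (cst x) (fun s : R => s *: v) 0 (fun s : R => s *: v) t _ _.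
have -> : (fun s : R => x + s *: v) = cst x + (fun s : R => s *: v) by [].
by split; [exact: ex_diff | rewrite diff_val add0r].
Qed.

Lemma gradient_mvt (x v : V) :
  exists2 c, c \in `]0, 1[ & h (x + v) - h x = dot (G (x + c *: v)) v.
Proof.
pose phi := h \o (fun s : R => x + s *: v).
have dphi t : differentiable phi t /\ 'd phi t 1 = dot (G (x + t *: v)) v.
  have [dl el] := differentiable_line x v t; have [dh eh] := hG (x + t *: v).
  split; first exact: differentiable_comp.
  by rewrite diff_comp // el eh /= scale1r.
have [t _||c c01] := @MVT R phi (fun t => dot (G (x + t *: v)) v) 0 1 ltr01.
- have [dt et] := dphi t.
  by apply: DeriveDef; [exact: diff_derivable | rewrite deriveE].
- apply: continuous_subspaceT => t.
  exact: differentiable_continuous (dphi t).1.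
by rewrite /phi /= scale1r scale0r addr0 subr0 mulr1 => E; exists c.
Qed.

Context {L : R}.
Hypotheses (L_ge0 : 0 <= L) (hL : lipschitz_grad G L).

(* The constant is L rather than L / 2 because it comes from the mean value
   theorem instead of an integral. *)
Lemma descent (x v : V) : h (x + v) <= h x + dot (G x) v + L * sqn v.
Proof.
have [c /[!in_itv]/= /andP[c_gt0 c_lt1] E] := gradient_mvt x v.
have step : dot (G (x + c *: v) - G x) v <= L * sqn v.
  apply: le_trans (dot_le_enormM _ _) _.
  have lip : enorm (G (x + c *: v) - G x) <= L * c * enorm v.
    have := hL (x + c *: v) x.
    by rewrite addrAC subrr add0r enormZ ?mulrA // ltW.
  rewrite -sqr_enorm expr2 mulrA ler_wpM2r ?sqrtr_ge0 // (le_trans lip) //.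
  by rewrite ler_wpM2r ?sqrtr_ge0 // ler_piMr // ltW.
by move: step; rewrite dotBl; lra.
Qed.

End Smoothness.

(* Descent from x along -G x / (2 L), the minimiser of the right-hand side. *)
Lemma sqn_gradient_le {R : realType} {d : nat} (h : 'rV[R]_d -> R) G (L : R) :
  0 < L -> has_gradient h G -> lipschitz_grad G L -> (forall x, 0 <= h x) ->
  forall x, sqn (G x) <= 4 * L * h x.
Proof.
move=> L_gt0 hG hL h_ge0 x.
have := descent hG (ltW L_gt0) hL x (- (2 * L)^-1 *: G x).
rewrite dotZr -/(sqn (G x)) sqnZ sqrrN.
have := h_ge0 (x - (2 * L)^-1 *: G x); rewrite -scaleNr.
have := sqn_ge0 (G x); set S := sqn (G x) => S_ge0 h_moved_ge0 h_descent.
have : S / (4 * L) <= h x.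
  suff E : h x + - (2 * L)^-1 * S + L * ((2 * L)^-1 ^+ 2 * S) = h x - S / (4 * L) by lra.
  by field; rewrite gt_eqF.
by rewrite ler_pdivrMr ?mulr_gt0 // mulrC.
Qed.

Section Integrals.
Context {R : realType} {dT : measure_display} {T : measurableType dT}.

Lemma ae_le_integral_integrable (mu : {measure set T -> \bar R}) (u k : T -> R) :
  measurable_fun setT u -> (forall w, 0 <= u w) ->
  mu.-integrable setT (EFin \o k) -> {ae mu, forall w, u w <= k w} ->
  (\int[mu]_w (u w)%:E <= \int[mu]_w (k w)%:E)%E.
Proof.
move=> m_u u_ge0 int_k le_uk.
have m_k : measurable_fun setT k by apply/measurable_EFinP; exact: measurable_int int_k.
have m_k0 : measurable_fun setT (fun w => Num.max (k w) 0) by exact: measurable_maxr.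
(* k is only a.e. nonnegative; its positive part has the same integral. *)
have -> : (\int[mu]_w (k w)%:E = \int[mu]_w (Num.max (k w) 0)%:E)%E.
  apply: ae_eq_integral => //; try exact/measurable_EFinP.
  by apply: filterS le_uk => w uk _; rewrite max_l // (le_trans (u_ge0 w)).
apply: ae_ge0_le_integral => //.
- by move=> w _; rewrite lee_fin u_ge0.
- exact/measurable_EFinP.
- by move=> w _; rewrite lee_fin le_max lexx orbT.
- exact/measurable_EFinP.
- by apply: filterS le_uk => w uk _; rewrite lee_fin le_max uk.
Qed.

Lemma integral_comp_ord (mu : {finite_measure set T -> \bar R}) {n : nat} (I : T -> 'I_n)
    (p F : 'I_n -> R) :
  (forall i, measurable (I @^-1` [set i]) /\ mu (I @^-1` [set i]) = (p i)%:E) ->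
  (\int[mu]_w (F (I w))%:E = (\sum_i F i * p i)%:E)%E.
Proof.
move=> hI.
have split_indic w : (F (I w))%:E = (\sum_i (F i)%:E * (\1_(I @^-1` [set i]) w)%:E)%E.
  rewrite (bigD1 (I w)) //= big1 ?adde0 => [|j /negbTE jI].
    by rewrite indicE mem_set //= mule1.
  by rewrite indicE memNset ?mule0 //= => /esym/eqP; rewrite jI.
under eq_integral => w _ do rewrite split_indic.
rewrite integral_sum // => [|i]; last first.
  by apply/integrableZl/integrable_indic => //; exact: (hI i).1.
rewrite -sumEFin; apply: eq_bigr => i _.
have [mi Pi] := hI i.
rewrite integralZl ?integral_indic // ?integrable_indic // setIT EFinM.
by congr (_ * _)%E; exact: Pi.
Qed.

Lemma probability_integral_cst (P : probability T R) (c : R) :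
  (\int[P]_w c%:E = c%:E)%E.
Proof. by have := expectation_cst P c; rewrite unlock. Qed.

End Integrals.

Section Oracles.
Context {R : realType} {d : nat} {dT : measure_display} {T : measurableType dT}.
Variable P : probability T R.
Local Notation V := 'rV[R]_d.
Variables (g : V -> T -> V) (gradf : V -> V).

Lemma measurable_sqn (h : T -> V) :
  (forall i, measurable_fun setT (fun w => h w 0 i)) ->
  measurable_fun setT (fun w => sqn (h w)).
Proof.
move=> mh; apply: measurable_sum => i.
exact: measurable_funM.
Qed.

Lemma RG_of_ESG alpha : ESG P g gradf alpha -> RG P g gradf (Num.max alpha 0) 0.
Proof.
move=> hE x; rewrite (le_trans (hE x)) // lee_fin addr0 ler_wpM2r ?sqn_ge0 //.
by rewrite le_max lexx.
Qed.

Lemma ES_of_RG f finf alpha beta :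
  RG P g gradf alpha beta -> ES P g f finf gradf 0 alpha beta.
Proof. by move=> hR x; rewrite mulr0 mul0r add0r; apply: hR. Qed.

Hypothesis g_unbiased : unbiased P g gradf.

Lemma unbiased_measurable x i : measurable_fun setT (fun w => g x w 0 i).
Proof. by apply/measurable_EFinP; exact: measurable_int (g_unbiased x i).1. Qed.

Lemma ESG_of_MSG alpha : 0 <= alpha -> MSG P g gradf alpha -> ESG P g gradf alpha.
Proof.
move=> alpha_ge0 hM x; rewrite -[leRHS](probability_integral_cst P).
apply: ae_ge0_le_integral => //.
- by move=> w _; rewrite lee_fin sqn_ge0.
- exact/measurable_EFinP/measurable_sqn/unbiased_measurable.
- by move=> w _; rewrite lee_fin mulr_ge0 ?sqn_ge0.
- by apply: filterS (hM x) => w Hw _; rewrite lee_fin.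
Qed.

Lemma RG_of_BV sigma : BV P g gradf sigma -> RG P g gradf 2 (2 * sigma ^+ 2).
Proof.
move=> hB x.
have m_dev : measurable_fun setT (fun w => (sqn (g x w - gradf x))%:E).
  apply/measurable_EFinP/measurable_sqn => i; under eq_fun => w do rewrite !mxE.
  exact/measurable_funB/measurable_cst/unbiased_measurable.
apply: (@le_trans _ _ (\int[P]_w (2%:E * (sqn (g x w - gradf x))%:E
                                  + (2 * sqn (gradf x))%:E))%E).
  apply: ge0_le_integral => //.
  - by move=> w _; rewrite lee_fin sqn_ge0.
  - exact/measurable_EFinP/measurable_sqn/unbiased_measurable.
  - by apply/emeasurable_funD/measurable_cst; exact: emeasurable_funM.
  - by move=> w _; rewrite -EFinM -EFinD lee_fin sqn_le_split.
rewrite ge0_integralD //; first last.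
- by move=> w _; rewrite lee_fin mulr_ge0 ?sqn_ge0.
- exact: emeasurable_funM.
- by move=> w _; rewrite mule_ge0 // lee_fin sqn_ge0.
rewrite ge0_integralZl_EFin //; last by move=> w _; rewrite lee_fin sqn_ge0.
rewrite probability_integral_cst [leRHS]EFinD [leRHS]addeC leeD2r // [leRHS]EFinM.
by rewrite lee_wpmul2l ?lee_fin.
Qed.

Lemma RG_of_gradient_confusion (n : nat) (gs : 'I_n -> V -> V) (I : T -> 'I_n) eta :
  (0 < n)%N ->
  (forall i, measurable (I @^-1` [set i]) /\ P (I @^-1` [set i]) = (n%:R^-1)%:E) ->
  (forall x w, g x w = gs (I w) x) ->
  (forall x (i j : 'I_n), i != j -> - eta <= dot (gs i x) (gs j x)) ->
  RG P g gradf n%:R ((n%:R - 1) * eta).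
Proof.
move=> n_gt0 uniform hg confusion x.
have n_gt0R : 0 < n%:R :> R by rewrite ltr0n.
have mean F : (\int[P]_w (F (I w))%:E = (n%:R^-1 * \sum_i F i)%:E)%E.
  by rewrite (integral_comp_ord _ _ _ F uniform) mulr_sumr; under eq_bigr do rewrite mulrC.
have grad_mean : gradf x = n%:R^-1 *: \sum_i gs i x.
  apply/rowP => k; rewrite !mxE summxE.
  have := (g_unbiased x k).2; under eq_integral do rewrite hg.
  by rewrite (mean (fun i => gs i x 0 k)) => -[<-].
under eq_integral do rewrite hg.
rewrite (mean (fun i => sqn (gs i x))) lee_fin grad_mean sqnZ.
have := sum_sqn_le_sqn_sum (confusion x).
set S := \sum_i sqn (gs i x); set N := sqn _ => le_SN.
rewrite -[leRHS](@mulKf _ n%:R) ?gt_eqF // ler_pM2l ?invr_gt0 //.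
suff -> : n%:R * (n%:R * (n%:R^-1 ^+ 2 * N) + (n%:R - 1) * eta)
          = N + n%:R * (n%:R - 1) * eta by [].
by field; rewrite gt_eqF.
Qed.

Lemma ES_of_SS (f : V -> R) finf L M (fxi : T -> V -> R) (gxi : T -> V -> V) :
  0 < M -> L <= M ->
  (forall w, has_gradient (fxi w) (gxi w)) ->
  (forall x, P.-integrable setT (fun w => (fxi w x)%:E) /\
             (f x)%:E = (\int[P]_w (fxi w x)%:E)%E) ->
  (forall x w, g x w = gxi w x) ->
  {ae P, forall w, forall x y,
     enorm (gxi w x - gxi w y) <= L * enorm (x - y) /\ 0 <= fxi w x} ->
  ES P g f finf gradf (2 * M) 0 (4 * M * Num.max finf 0).
Proof.
move=> M_gt0 LM hgrad hf hg hSS x.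
apply: le_trans (_ : (\int[P]_w ((4 * M)%:E * (fxi w x)%:E) <= _)%E).
  apply: ae_le_integral_integrable.
  - exact/measurable_sqn/unbiased_measurable.
  - by move=> w; apply: sqn_ge0.
  - exact: integrableZl (hf x).1.
  apply: filterS hSS => w SS; rewrite hg.
  apply: sqn_gradient_le (hgrad w) _ (fun y => (SS y y).2) x => //.
  move=> y z; apply: le_trans (SS y z).1 _.
  by rewrite ler_wpM2r ?sqrtr_ge0.
rewrite integralZl ?(hf x).1 // -(hf x).2 -EFinM lee_fin.
have : finf <= Num.max finf 0 by rewrite le_max lexx.
by have := sqn_ge0 (gradf x); nra.
Qed.

End Oracles.

Theorem theorem1 (R : realType) (d : nat)
  (f : 'rV[R]_d -> R) (gradf : 'rV[R]_d -> 'rV[R]_d) (finf L : R)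
  (dT : measure_display) (T : measurableType dT) (P : probability T R)
  (g : 'rV[R]_d -> T -> 'rV[R]_d) :
  has_gradient f gradf ->
  is_inf_of f finf ->
  lipschitz_grad gradf L ->
  unbiased P g gradf ->
  (* (1) *)
  (forall alpha, 0 <= alpha -> MSG P g gradf alpha ->
     exists alpha', 0 <= alpha' /\ ESG P g gradf alpha') /\
  (* (2) *)
  (forall alpha, ESG P g gradf alpha ->
     exists alpha' beta, [/\ 0 <= alpha', 0 <= beta & RG P g gradf alpha' beta]) /\
  (* (3) *)
  (forall sigma, 0 <= sigma -> BV P g gradf sigma ->
     exists alpha beta, [/\ 0 <= alpha, 0 <= beta & RG P g gradf alpha beta]) /\
  (* (4) finite sum, uniform sampling *)
  (forall (n : nat) (fs : 'I_n -> 'rV[R]_d -> R)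
          (gs : 'I_n -> 'rV[R]_d -> 'rV[R]_d) (I : T -> 'I_n) (eta : R),
     (0 < n)%N ->
     (forall i, has_gradient (fs i) (gs i)) ->
     (forall x, f x = n%:R^-1 * \sum_(i < n) fs i x) ->
     (forall i, measurable (I @^-1` [set i]) /\
                P (I @^-1` [set i]) = (n%:R^-1)%:E) ->
     (forall x w, g x w = gs (I w) x) ->
     0 < eta ->
     (forall x (i j : 'I_n), i != j -> dot (gs i x) (gs j x) >= - eta) ->
     exists alpha beta, [/\ 0 <= alpha, 0 <= beta & RG P g gradf alpha beta]) /\
  (* (5) *)
  (forall alpha beta, 0 <= alpha -> 0 <= beta -> RG P g gradf alpha beta ->
     exists A B C, [/\ 0 <= A, 0 <= B, 0 <= C & ES P g f finf gradf A B C]) /\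
  (* (6) expectation of a family f_xi, xi ~ P, with sure smoothness (SS) *)
  (forall (fxi : T -> 'rV[R]_d -> R) (gxi : T -> 'rV[R]_d -> 'rV[R]_d),
     (forall w, has_gradient (fxi w) (gxi w)) ->
     (forall x, P.-integrable setT (fun w => (fxi w x)%:E) /\
                (f x)%:E = (\int[P]_w (fxi w x)%:E)%E) ->
     (forall x w, g x w = gxi w x) ->
     {ae P, forall w, forall x y,
        enorm (gxi w x - gxi w y) <= L * enorm (x - y) /\ 0 <= fxi w x} ->
     exists A B C, [/\ 0 <= A, 0 <= B, 0 <= C & ES P g f finf gradf A B C]).
Proof.
move=> _ _ _ g_unbiased; split; [|split; [|split; [|split; [|split]]]].
- by move=> alpha alpha_ge0 hM; exists alpha; split; last exact: ESG_of_MSG.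
- move=> alpha hE; exists (Num.max alpha 0), 0; split => //; last exact: RG_of_ESG.
  by rewrite le_max lexx orbT.
- move=> sigma _ hB; exists 2, (2 * sigma ^+ 2); split => //; last exact: RG_of_BV.
  by rewrite mulr_ge0 ?sqr_ge0.
- move=> n _ gs I eta n_gt0 _ _ uniform hg eta_gt0 hGC.
  exists n%:R, ((n%:R - 1) * eta); split => //; last exact: RG_of_gradient_confusion.
  by rewrite mulr_ge0 ?(ltW eta_gt0) // subr_ge0 ler1n.
- move=> alpha beta alpha_ge0 beta_ge0 hR.
  by exists 0, alpha, beta; split => //; exact: ES_of_RG.
- move=> fxi gxi hgrad hf hg hSS; set M := Num.max L 1.
  have M_gt0 : 0 < M by rewrite lt_max ltr01 orbT.
  have finf_le : 0 <= Num.max finf 0 by rewrite le_max lexx orbT.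
  exists (2 * M), 0, (4 * M * Num.max finf 0); split => //.
  + by rewrite mulr_ge0 // ltW.
  + by rewrite !mulr_ge0 // ltW.
  by apply: ES_of_SS hgrad hf hg hSS => //; rewrite le_max lexx.
Qed.
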